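(* Let $\mathbb{T}=[0,2\pi)\times[0,2\pi)$ with periodic boundary conditions, let $0\le \alpha<1$ and $\kappa>0$, and consider the surface quasi-geostrophic equation $$\partial_t\theta+\mathbf{u}\cdot\nabla\theta+\kappa(-\Delta)^\alpha\theta=0,\qquad \mathbf{u}=(\partial_y,-\partial_x)(-\Delta)^{-\frac12}\theta,$$ for a scalar function $\theta(x,y,t)$ on $\mathbb{T}\times[0,\infty)$. (i) Let $c_1,\dots,c_8$ be real constants and let $n,m,k$ be integers with $nm\neq 0$, such that $n^2+m^2=k^2$ whenever $(|c_1|+|c_2|+|c_3|+|c_4|)(|c_5|+|c_6|+|c_7|+|c_8|)\neq 0$. Then $$\theta=e^{-\kappa(n^2+m^2)^\alpha t}\big(c_1\sin nx\sin my+c_2\cos nx\sin my+c_3\sin nx\cos my+c_4\cos nx\cos my\big)$$ $$\qquad+e^{-\kappa|k|^{2\alpha}t}\big(c_5\sin kx+c_6\sin ky+c_7\cos kx+c_8\cos ky\big)$$ is an exact solution of the equation on $\mathbb{T}$. (ii) Let $n,m$ be integers with $|n|+|m|\neq 0$, and let $(a_k)_{k\in\mathbb{Z}},(b_k)_{k\in\mathbb{Z}}$ be real constants with $\sum_{k\in\mathbb{Z}}|k|(a_k^2+b_k^2)<\infty$. Then $$\theta=\sum_{k\in\mathbb{Z}}e^{-\kappa(n^2k^2+m^2k^2)^\alpha t}\big(a_k\cos(knx+kmy)+b_k\sin(knx+kmy)\big)$$ solves the equation on $\mathbb{T}$.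
   Context: On the $2\pi$-periodic torus $\mathbb{T}$, the operators $(-\Delta)^\alpha$ and $(-\Delta)^{-\frac12}$ are the Fourier multipliers acting on $e^{i(px+qy)}$ by multiplication by $(p^2+q^2)^\alpha$ and $(p^2+q^2)^{-1/2}$ respectively (the latter on nonzero Fourier modes). Thus $\mathbf{u}=(\partial_y(-\Delta)^{-1/2}\theta,\,-\partial_x(-\Delta)^{-1/2}\theta)$. *)

From Stdlib Require Import Reals ZArith.
From Coquelicot Require Import Coquelicot.

Open Scope R_scope.

(* r^a for r >= 0, with the convention 0^0 = 1 (so that (-Δ)^0 = Id and the
   multiplier (p^2+q^2)^α at the zero mode is 0 for α > 0 and 1 for α = 0). *)
Definition fracpow (r a : R) : R :=
  if Req_EM_T r 0 then (if Req_EM_T a 0 then 1 else 0) else Rpower r a.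

Definition modsq (p q : Z) : R := IZR p ^ 2 + IZR q ^ 2.

(* normalized Fourier coefficient of f on the 2π-periodic torus:
   (1/4π^2) ∫_0^{2π}∫_0^{2π} f(x,y) e^{-i(px+qy)} dy dx *)
Definition fcoef (f : R -> R -> R) (p q : Z) : C :=
  (/ (4 * PI ^ 2) *
     RInt (fun x => RInt (fun y => f x y * cos (IZR p * x + IZR q * y)) 0 (2 * PI)) 0 (2 * PI),
   - (/ (4 * PI ^ 2) *
     RInt (fun x => RInt (fun y => f x y * sin (IZR p * x + IZR q * y)) 0 (2 * PI)) 0 (2 * PI))).

Definition box_sum (F : Z -> Z -> C) (N : nat) : C :=
  sum_n (fun i => sum_n (fun j =>
     F (Z.of_nat i - Z.of_nat N)%Z (Z.of_nat j - Z.of_nat N)%Z) (2 * N)) (2 * N).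

Definition box_sum_R (F : Z -> Z -> R) (N : nat) : R :=
  sum_n (fun i => sum_n (fun j =>
     F (Z.of_nat i - Z.of_nat N)%Z (Z.of_nat j - Z.of_nat N)%Z) (2 * N)) (2 * N).

Definition is_sum_Z2 (F : Z -> Z -> C) (s : C) : Prop :=
  (exists M : R, forall N, box_sum_R (fun p q => Cmod (F p q)) N <= M) /\
  filterlim (box_sum F) eventually (locally s).

(* Fourier coefficient at ξ = (p,q) of u·∇θ, u = (∂_y,-∂_x)(-Δ)^{-1/2}θ, with
   Θ the Fourier coefficients of θ (convention e^{i(px+qy)}): the term indexed
   by η = (a,b) (η ≠ 0, ζ = ξ - η) is  (η1 ζ2 - η2 ζ1)/|η| Θ(η) Θ(ζ). *)
Definition sqg_nl_term (Th : Z -> Z -> C) (p q a b : Z) : C :=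
  if (Z.eqb a 0 && Z.eqb b 0)%bool then RtoC 0
  else Cmult (Cmult (RtoC ((IZR a * IZR (q - b) - IZR b * IZR (p - a)) / sqrt (modsq a b)))
                    (Th a b)) (Th (p - a)%Z (q - b)%Z).

(* Θ(p,q,t) (Fourier coefficients of θ(·,·,t)) solves SQG
   ∂_tθ + u·∇θ + κ(-Δ)^α θ = 0 on T×[0,∞), written mode by mode:
   θ(t) ∈ L^2(T) for t >= 0, the nonlinear convolution sum converges absolutely,
   and  d/dt Θ(ξ,t) = - (u·∇θ)^(ξ,t) - κ |ξ|^{2α} Θ(ξ,t). *)
Definition SQG_fourier_solution (kappa alpha : R) (Th : Z -> Z -> R -> C) : Prop :=
  (forall t, 0 <= t -> exists M : R, forall N,
      box_sum_R (fun p q => Cmod (Th p q t) ^ 2) N <= M) /\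
  (forall (p q : Z) (t : R), 0 <= t ->
     exists Nl : C,
       is_sum_Z2 (sqg_nl_term (fun a b => Th a b t) p q) Nl /\
       let rhs := Cminus (Copp Nl)
                   (Cmult (RtoC (kappa * fracpow (modsq p q) alpha)) (Th p q t)) in
       is_derive (fun s => Re (Th p q s)) t (Re rhs) /\
       is_derive (fun s => Im (Th p q s)) t (Im rhs)).

Definition periodic_xy (f : R -> R -> R) : Prop :=
  forall x y, f (x + 2 * PI) y = f x y /\ f x (y + 2 * PI) = f x y.

Definition solves_SQG (kappa alpha : R) (theta : R -> R -> R -> R) : Prop :=
  (forall t, periodic_xy (fun x y => theta x y t)) /\
  SQG_fourier_solution kappa alpha (fun p q t => fcoef (fun x y => theta x y t) p q).

(* θ = Σ_{k∈Z} θ_k (series understood in L^2(T), i.e. coefficientwise: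
   the Fourier coefficients of θ(t) are the (symmetric) sums of those of θ_k(t))
   solves SQG on T. *)
Definition solves_SQG_series (kappa alpha : R) (thk : Z -> R -> R -> R -> R) : Prop :=
  (forall k t, periodic_xy (fun x y => thk k x y t)) /\
  exists Th : Z -> Z -> R -> C,
    (forall p q t, filterlim
        (fun K : nat => sum_n (fun i =>
           fcoef (fun x y => thk (Z.of_nat i - Z.of_nat K)%Z x y t) p q) (2 * K))
        eventually (locally (Th p q t))) /\
    SQG_fourier_solution kappa alpha Th.

(* Both families are finite or convergent superpositions of Fourier modes, each decaying at
   its own linear rate exp (- kappa |xi|^(2 alpha) t).  Such a superposition solves SQG exactly
   when every Fourier coefficient of the quadratic term u.grad(theta) vanishes; the coefficient
   at xi is the sum over eta + zeta = xi of (eta x zeta) / |eta| Theta(eta) Theta(zeta).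
   In (i) all active wavevectors lie on a single circle (this is where n^2 + m^2 = k^2 is used),
   so the summand is antisymmetric under eta <-> zeta and the sum cancels.  In (ii) all active
   wavevectors lie on the line Z (n, m), where eta x zeta = 0 termwise.  The Fourier coefficients
   of the trigonometric polynomials involved are computed exactly by orthogonality on the torus,
   and in (ii) the weighted summability of (a_k, b_k) gives the L^2 bound. *)

From Stdlib Require Import Reals ZArith Lia Lra List FunctionalExtensionality Classical.
From Coquelicot Require Import Coquelicot.
Import ListNotations.
Open Scope R_scope.

(** * Symmetric partial sums over Z and Z^2 *)

(* The sum over [-K <= k <= K]; the [box_sum]s in [is_sum_Z2] are iterated [sym_sum]s. *)
Definition sym_sum {G : AbelianMonoid} (g : Z -> G) (K : nat) : G :=
  sum_n (fun i => g (Z.of_nat i - Z.of_nat K)%Z) (2 * K).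

Lemma sym_sum_O {G : AbelianMonoid} (g : Z -> G) : sym_sum g 0 = g 0%Z.
Proof. unfold sym_sum; simpl. rewrite sum_O; reflexivity. Qed.

Lemma sym_sum_S {G : AbelianMonoid} (g : Z -> G) (K : nat) :
  sym_sum g (S K) = plus (g (- Z.of_nat (S K))%Z) (plus (sym_sum g K) (g (Z.of_nat (S K)))).
Proof.
  unfold sym_sum, sum_n. replace (2 * S K)%nat with (S (S (2 * K))) by lia.
  rewrite sum_n_Sm, sum_Sn_m by lia. rewrite <- sum_n_m_S, plus_assoc.
  f_equal; [f_equal|].
  - apply sum_n_m_ext; intros; f_equal; lia.
  - f_equal; lia.
Qed.

Lemma sym_sum_ext {G : AbelianMonoid} (g h : Z -> G) (K : nat) :
  (forall k, g k = h k) -> sym_sum g K = sym_sum h K.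
Proof. intros E; apply sum_n_ext; intros; apply E. Qed.

Lemma sym_sum_zero {G : AbelianMonoid} (K : nat) : sym_sum (fun _ => @zero G) K = zero.
Proof. apply sum_n_m_const_zero. Qed.

Lemma sym_sum_plus {G : AbelianMonoid} (g h : Z -> G) (K : nat) :
  sym_sum (fun k => plus (g k) (h k)) K = plus (sym_sum g K) (sym_sum h K).
Proof. apply sum_n_plus. Qed.

Lemma sym_sum_mult_l {K : Ring} (c : K) (g : Z -> K) (N : nat) :
  sym_sum (fun k => mult c (g k)) N = mult c (sym_sum g N).
Proof. apply sum_n_mult_l. Qed.

Lemma sym_sum_switch {G : AbelianMonoid} (u : Z -> Z -> G) (N K : nat) :
  sym_sum (fun i => sym_sum (u i) K) N = sym_sum (fun j => sym_sum (fun i => u i j) N) K.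
Proof. apply sum_n_switch. Qed.

Lemma sym_sum_stable {G : AbelianMonoid} (g : Z -> G) (B K : nat) :
  (forall k, (Z.of_nat B < Z.abs k)%Z -> g k = zero) -> (B <= K)%nat ->
  sym_sum g K = sym_sum g B.
Proof.
  intros Hg HK. induction HK as [|K HK IH]; [reflexivity|].
  rewrite sym_sum_S, IH, !Hg by lia. rewrite plus_zero_l, plus_zero_r. reflexivity.
Qed.

Lemma sym_sum_dirac {G : AbelianMonoid} (j : Z) (c : G) (K : nat) :
  sym_sum (fun k => if Z.eqb k j then c else zero) K
  = if Z.leb (Z.abs j) (Z.of_nat K) then c else zero.
Proof.
  induction K as [|K IH].
  - rewrite sym_sum_O. change (Z.of_nat 0) with 0%Z.
    destruct (Z.eqb_spec 0 j), (Z.leb_spec (Z.abs j) 0); auto; lia.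
  - rewrite sym_sum_S, IH.
    destruct (Z.eqb_spec (- Z.of_nat (S K)) j), (Z.eqb_spec (Z.of_nat (S K)) j),
      (Z.leb_spec (Z.abs j) (Z.of_nat K)), (Z.leb_spec (Z.abs j) (Z.of_nat (S K)));
      rewrite ?plus_zero_l, ?plus_zero_r; auto; lia.
Qed.

Lemma sym_sum_reflect {G : AbelianMonoid} (g : Z -> G) (K : nat) :
  sym_sum (fun k => g (- k)%Z) K = sym_sum g K.
Proof.
  induction K as [|K IH].
  - rewrite !sym_sum_O. reflexivity.
  - rewrite !sym_sum_S, IH, Z.opp_involutive.
    set (a := g (Z.of_nat (S K))). set (b := g (- Z.of_nat (S K))%Z).
    rewrite plus_assoc, (plus_comm _ b), (plus_comm a). reflexivity.
Qed.

Lemma sym_sum_S_R (g : Z -> R) (K : nat) :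
  sym_sum g (S K) = g (- Z.of_nat (S K))%Z + sym_sum g K + g (Z.of_nat (S K)).
Proof. rewrite sym_sum_S, Rplus_assoc. reflexivity. Qed.

Lemma sym_sum_le (g h : Z -> R) (K : nat) :
  (forall k, (Z.abs k <= Z.of_nat K)%Z -> g k <= h k) -> sym_sum g K <= sym_sum h K.
Proof.
  induction K as [|K IH]; intros H.
  - rewrite !sym_sum_O. apply H. lia.
  - rewrite !sym_sum_S_R. assert (sym_sum g K <= sym_sum h K) by (apply IH; intros; apply H; lia).
    assert (g (- Z.of_nat (S K))%Z <= h (- Z.of_nat (S K))%Z) by (apply H; lia).
    assert (g (Z.of_nat (S K)) <= h (Z.of_nat (S K))) by (apply H; lia). lra.
Qed.

Lemma sym_sum_mono (g : Z -> R) (K K' : nat) :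
  (forall k, 0 <= g k) -> (K <= K')%nat -> sym_sum g K <= sym_sum g K'.
Proof.
  intros Hg HK. induction HK as [|K' HK IH]; [lra|].
  rewrite sym_sum_S_R. pose proof (Hg (- Z.of_nat (S K'))%Z). pose proof (Hg (Z.of_nat (S K'))).
  lra.
Qed.

Lemma sym_sum_nonneg (g : Z -> R) (K : nat) : (forall k, 0 <= g k) -> 0 <= sym_sum g K.
Proof.
  intros Hg. apply Rle_trans with (sym_sum g 0); [rewrite sym_sum_O; apply Hg|].
  apply sym_sum_mono; [exact Hg | lia].
Qed.

Lemma sym_sum_plus_reflect (g : Z -> R) (K : nat) :
  sym_sum (fun k => g k + g (- k)%Z) K = 2 * sym_sum g K.
Proof.
  transitivity (sym_sum g K + sym_sum (fun k => g (- k)%Z) K).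
  - exact (sym_sum_plus g (fun k => g (- k)%Z) K).
  - rewrite sym_sum_reflect. change (sym_sum g K + sym_sum g K = 2 * sym_sum g K). ring.
Qed.

Lemma sym_sum_le_series (g : Z -> R) : (forall k, 0 <= g k) ->
  ex_series (fun j : nat => INR j * g (Z.of_nat j) + INR j * g (- Z.of_nat j)%Z) ->
  forall K, sym_sum g K
            <= g 0%Z + Series (fun j : nat => INR j * g (Z.of_nat j) + INR j * g (- Z.of_nat j)%Z).
Proof.
  intros Hg Hser.
  set (u := fun j : nat => INR j * g (Z.of_nat j) + INR j * g (- Z.of_nat j)%Z) in *.
  assert (Hu : forall j, g (Z.of_nat (S j)) + g (- Z.of_nat (S j))%Z <= u (S j)).
  { intros j. unfold u. rewrite S_INR. pose proof (pos_INR j).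
    pose proof (Hg (Z.of_nat (S j))). pose proof (Hg (- Z.of_nat (S j))%Z). nra. }
  assert (Hpartial : forall K, sum_n u K <= Series u).
  { intros K. apply (is_lim_seq_incr_compare (sum_n u)); [exact (Series_correct u Hser)|].
    intros k. rewrite sum_Sn. change (plus ?x ?y) with (x + y).
    pose proof (Hu k). pose proof (Hg (Z.of_nat (S k))). pose proof (Hg (- Z.of_nat (S k))%Z).
    lra. }
  intros K. apply Rle_trans with (g 0%Z + sum_n u K); [|pose proof (Hpartial K); lra].
  induction K as [|K IH].
  - rewrite sym_sum_O, sum_O. unfold u. simpl. lra.
  - rewrite sym_sum_S_R, sum_Sn. change (plus ?x ?y) with (x + y). pose proof (Hu K). lra.
Qed.

Definition supported_in_box {G : AbelianMonoid} (F : Z -> Z -> G) (B : nat) : Prop :=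
  forall p q, (Z.of_nat B < Z.abs p)%Z \/ (Z.of_nat B < Z.abs q)%Z -> F p q = zero.

Lemma box_sum_supported {G : AbelianMonoid} (F : Z -> Z -> G) (B N : nat) :
  supported_in_box F B -> (B <= N)%nat ->
  sym_sum (fun p => sym_sum (F p) N) N = sym_sum (fun p => sym_sum (F p) B) B.
Proof.
  intros HF HN. rewrite (sym_sum_ext _ (fun p => sym_sum (F p) B)).
  - apply sym_sum_stable; [|exact HN]. intros p Hp.
    rewrite <- (sym_sum_zero B). apply sym_sum_ext. intros q. apply HF; auto.
  - intros p. apply sym_sum_stable; [|exact HN]. intros q Hq. apply HF; auto.
Qed.

Lemma box_sum_R_sym_sum (F : Z -> Z -> R) (N : nat) :
  box_sum_R F N = sym_sum (fun p => sym_sum (F p) N) N.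
Proof. reflexivity. Qed.

Lemma box_sum_sym_sum (F : Z -> Z -> C) (N : nat) :
  box_sum F N = sym_sum (fun p => sym_sum (F p) N) N.
Proof. reflexivity. Qed.

Lemma box_sum_R_le (F G : Z -> Z -> R) (N : nat) :
  (forall p q, (Z.abs p <= Z.of_nat N)%Z -> (Z.abs q <= Z.of_nat N)%Z -> F p q <= G p q) ->
  box_sum_R F N <= box_sum_R G N.
Proof.
  intros H. rewrite !box_sum_R_sym_sum. apply sym_sum_le. intros p Hp.
  apply sym_sum_le. intros q Hq. apply H; assumption.
Qed.

Lemma box_sum_R_le_supported (F : Z -> Z -> R) (B N : nat) :
  (forall p q, 0 <= F p q) -> supported_in_box F B -> box_sum_R F N <= box_sum_R F B.
Proof.
  intros Hpos HF. rewrite !box_sum_R_sym_sum. destruct (Nat.le_ge_cases N B) as [HNB | HBN].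
  - apply Rle_trans with (sym_sum (fun p => sym_sum (F p) B) N).
    + apply sym_sum_le. intros p _. apply sym_sum_mono; auto.
    + apply sym_sum_mono; [|exact HNB]. intros p. apply sym_sum_nonneg; auto.
  - right. exact (box_sum_supported F B N HF HBN).
Qed.

Definition l2_bounded (F : Z -> Z -> C) : Prop :=
  exists M : R, forall N, box_sum_R (fun p q => Cmod (F p q) ^ 2) N <= M.

Lemma Cmod_sqr_components (z : C) : Cmod z ^ 2 = Re z ^ 2 + Im z ^ 2.
Proof.
  unfold Cmod. rewrite pow2_sqrt; [reflexivity|].
  pose proof (pow2_ge_0 (fst z)). pose proof (pow2_ge_0 (snd z)). lra.
Qed.

Lemma l2_bounded_supported (F : Z -> Z -> C) (B : nat) :
  supported_in_box F B -> l2_bounded F.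
Proof.
  intros HF. exists (box_sum_R (fun p q => Cmod (F p q) ^ 2) B). intros N.
  apply box_sum_R_le_supported.
  - intros; apply pow2_ge_0.
  - intros p q Hpq. rewrite (HF p q Hpq). change (Cmod 0 ^ 2 = 0). rewrite Cmod_0. ring.
Qed.

Lemma is_sum_Z2_supported (F : Z -> Z -> C) (B : nat) :
  supported_in_box F B -> is_sum_Z2 F (box_sum F B).
Proof.
  intros HF. split.
  - exists (box_sum_R (fun p q => Cmod (F p q)) B). intros N.
    apply box_sum_R_le_supported.
    + intros; apply Cmod_ge_0.
    + intros p q Hpq. rewrite (HF p q Hpq). exact Cmod_0.
  - apply (filterlim_ext_loc (fun _ => box_sum F B)); [|apply filterlim_const].
    exists B. intros N HN. symmetry. exact (box_sum_supported F B N HF HN).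
Qed.

Definition dirac (a b : Z) (c : C) (p q : Z) : C :=
  if (Z.eqb p a && Z.eqb q b)%bool then c else RtoC 0.

Lemma sym_sum_box_dirac {G : AbelianMonoid} (a b : Z) (c : G) (N : nat) :
  sym_sum (fun p => sym_sum (fun q => if (Z.eqb p a && Z.eqb q b)%bool then c else zero) N) N
  = if (Z.leb (Z.abs a) (Z.of_nat N) && Z.leb (Z.abs b) (Z.of_nat N))%bool then c else zero.
Proof.
  set (cb := if Z.leb (Z.abs b) (Z.of_nat N) then c else zero).
  rewrite (sym_sum_ext _ (fun p => if Z.eqb p a then cb else zero)).
  - rewrite sym_sum_dirac. unfold cb. destruct (Z.leb _ _), (Z.leb _ _); reflexivity.
  - intros p. destruct (Z.eqb p a); simpl; [apply sym_sum_dirac | apply sym_sum_zero].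
Qed.

Lemma box_sum_dirac (a b : Z) (c : C) (N : nat) :
  box_sum (dirac a b c) N
  = if (Z.leb (Z.abs a) (Z.of_nat N) && Z.leb (Z.abs b) (Z.of_nat N))%bool then c else RtoC 0.
Proof. exact (sym_sum_box_dirac (G := C_AbelianMonoid) a b c N). Qed.

Definition indicator (a b p q : Z) : R := if (Z.eqb p a && Z.eqb q b)%bool then 1 else 0.

Lemma box_sum_R_indicator_le_1 (a b : Z) (N : nat) : box_sum_R (indicator a b) N <= 1.
Proof.
  pose proof (sym_sum_box_dirac (G := R_AbelianMonoid) a b 1 N) as E.
  change (@zero R_AbelianMonoid) with 0 in E.
  apply (Rle_trans _ _ _ (Req_le _ _ E)). destruct (_ && _)%bool; lra.
Qed.

Lemma box_sum_R_le_sym_sum (F : Z -> Z -> R) (e1 e2 : Z -> Z) (s : Z -> R) (N K : nat) :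
  (forall j, 0 <= s j) ->
  (forall p q, (Z.abs p <= Z.of_nat N)%Z -> (Z.abs q <= Z.of_nat N)%Z ->
     F p q <= sym_sum (fun j => indicator (e1 j) (e2 j) p q * s j) K) ->
  box_sum_R F N <= sym_sum s K.
Proof.
  intros Hs HF. eapply Rle_trans; [apply box_sum_R_le, HF|].
  rewrite box_sum_R_sym_sum.
  rewrite (sym_sum_ext _ (fun p => sym_sum (fun j =>
             sym_sum (fun q => indicator (e1 j) (e2 j) p q * s j) N) K))
    by (intros p; apply sym_sum_switch).
  rewrite sym_sum_switch. apply sym_sum_le. intros j _.
  apply Rle_trans with (s j * box_sum_R (indicator (e1 j) (e2 j)) N).
  - right. rewrite box_sum_R_sym_sum.
    etransitivity; [|exact (sym_sum_mult_l (K := R_Ring) (s j) _ N)]. apply sym_sum_ext. intros p.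
    etransitivity; [|exact (sym_sum_mult_l (K := R_Ring) (s j) _ N)]. apply sym_sum_ext. intros q.
    apply Rmult_comm.
  - pose proof (box_sum_R_indicator_le_1 (e1 j) (e2 j) N). pose proof (Hs j). nra.
Qed.

(** * Finite superpositions of Fourier modes *)

Definition sumC {X : Type} (f : X -> C) (l : list X) : C :=
  fold_right (fun x s => (f x + s)%C) (RtoC 0) l.

Lemma sumC_ext {X : Type} (f g : X -> C) (l : list X) :
  (forall x, In x l -> f x = g x) -> sumC f l = sumC g l.
Proof. induction l as [|x l IH]; simpl; intros H; [reflexivity|]. rewrite H, IH; auto. Qed.

Lemma sumC_zero {X : Type} (l : list X) : sumC (fun _ => RtoC 0) l = RtoC 0.
Proof. induction l as [|x l IH]; simpl; [reflexivity|]. rewrite IH. ring. Qed.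

Lemma sumC_plus {X : Type} (f g : X -> C) (l : list X) :
  sumC (fun x => f x + g x)%C l = (sumC f l + sumC g l)%C.
Proof. induction l as [|x l IH]; simpl; [ring|]. rewrite IH. ring. Qed.

Lemma sumC_mult_l {X : Type} (c : C) (f : X -> C) (l : list X) :
  sumC (fun x => c * f x)%C l = (c * sumC f l)%C.
Proof. induction l as [|x l IH]; simpl; [ring|]. rewrite IH. ring. Qed.

Lemma sumC_opp {X : Type} (f : X -> C) (l : list X) :
  sumC (fun x => - f x)%C l = (- sumC f l)%C.
Proof. induction l as [|x l IH]; simpl; [ring|]. rewrite IH. ring. Qed.

Lemma sumC_app {X : Type} (f : X -> C) (l1 l2 : list X) :
  sumC f (l1 ++ l2) = (sumC f l1 + sumC f l2)%C.
Proof. induction l1 as [|x l IH]; simpl; [ring|]. rewrite IH. ring. Qed.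

Lemma sumC_map {X Y : Type} (f : Y -> C) (g : X -> Y) (l : list X) :
  sumC f (map g l) = sumC (fun x => f (g x)) l.
Proof. induction l as [|x l IH]; simpl; [reflexivity|]. rewrite IH. reflexivity. Qed.

Lemma sumC_flat_map {X Y : Type} (f : Y -> C) (g : X -> list Y) (l : list X) :
  sumC f (flat_map g l) = sumC (fun x => sumC f (g x)) l.
Proof. induction l as [|x l IH]; simpl; [reflexivity|]. rewrite sumC_app, IH. reflexivity. Qed.

Lemma sumC_swap {X Y : Type} (A : X -> Y -> C) (l1 : list X) (l2 : list Y) :
  sumC (fun x => sumC (A x) l2) l1 = sumC (fun y => sumC (fun x => A x y) l1) l2.
Proof.
  induction l1 as [|x l1 IH]; simpl.
  - symmetry. apply sumC_zero.
  - rewrite IH, <- sumC_plus. reflexivity.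
Qed.

Lemma sumC_antisym {X : Type} (A : X -> X -> C) (l : list X) :
  (forall x y, In x l -> In y l -> A x y = (- A y x)%C) ->
  sumC (fun x => sumC (A x) l) l = RtoC 0.
Proof.
  intros HA. set (S := sumC (fun x => sumC (A x) l) l).
  assert (HS : S = (- S)%C).
  { unfold S. rewrite sumC_swap at 1. rewrite <- sumC_opp.
    apply sumC_ext. intros y Hy. rewrite <- sumC_opp. apply sumC_ext. intros x Hx.
    exact (HA x y Hx Hy). }
  destruct S as [u v]. injection HS as Hu Hv. unfold RtoC. f_equal; lra.
Qed.

Lemma box_sum_sumC {X : Type} (f : X -> Z -> Z -> C) (l : list X) (N : nat) :
  box_sum (fun p q => sumC (fun x => f x p q) l) N = sumC (fun x => box_sum (f x) N) l.
Proof.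
  induction l as [|x l IH]; simpl.
  - rewrite box_sum_sym_sum. transitivity (sym_sum (fun _ => @zero C_AbelianMonoid) N).
    + apply sym_sum_ext. intros p. exact (sym_sum_zero N).
    + exact (sym_sum_zero N).
  - rewrite <- IH, !box_sum_sym_sum.
    transitivity (sym_sum (fun p => plus (sym_sum (f x p) N)
                                         (sym_sum (fun q => sumC (fun y => f y p q) l) N)) N).
    + apply sym_sum_ext. intros p.
      exact (sym_sum_plus (f x p) (fun q => sumC (fun y => f y p q) l) N).
    + exact (sym_sum_plus (fun p => sym_sum (f x p) N)
                          (fun p => sym_sum (fun q => sumC (fun y => f y p q) l) N) N).
Qed.

Record mode := Mode { mode_p : Z; mode_q : Z; mode_amp : C }.

Definition modes_field (M : list mode) (p q : Z) : C :=
  sumC (fun md => dirac (mode_p md) (mode_q md) (mode_amp md) p q) M.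

Definition modes_radius (M : list mode) : nat :=
  fold_right (fun md r => Nat.max (Z.to_nat (Z.abs (mode_p md) + Z.abs (mode_q md))) r) 0%nat M.

Lemma modes_radius_spec (M : list mode) (md : mode) : In md M ->
  (Z.abs (mode_p md) <= Z.of_nat (modes_radius M))%Z /\
  (Z.abs (mode_q md) <= Z.of_nat (modes_radius M))%Z.
Proof.
  induction M as [|md' M IH]; simpl; intros H; [easy|].
  destruct H as [<- | H]; [|specialize (IH H)]; lia.
Qed.

Lemma modes_field_supported (M : list mode) : supported_in_box (modes_field M) (modes_radius M).
Proof.
  intros p q Hpq. change (modes_field M p q = RtoC 0). unfold modes_field.
  rewrite <- (sumC_zero M). apply sumC_ext. intros md Hmd.
  destruct (modes_radius_spec M md Hmd). unfold dirac.
  destruct (Z.eqb_spec p (mode_p md)), (Z.eqb_spec q (mode_q md)); simpl; auto; lia.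
Qed.

Lemma box_sum_modes_field (M : list mode) (N : nat) : (modes_radius M <= N)%nat ->
  box_sum (modes_field M) N = sumC mode_amp M.
Proof.
  intros HN. unfold modes_field. rewrite box_sum_sumC. apply sumC_ext. intros md Hmd.
  destruct (modes_radius_spec M md Hmd). rewrite box_sum_dirac.
  destruct (Z.leb_spec (Z.abs (mode_p md)) (Z.of_nat N)),
    (Z.leb_spec (Z.abs (mode_q md)) (Z.of_nat N)); simpl; auto; lia.
Qed.

Lemma is_sum_Z2_modes_field (M : list mode) : is_sum_Z2 (modes_field M) (sumC mode_amp M).
Proof.
  rewrite <- (box_sum_modes_field M (modes_radius M)) by lia.
  apply is_sum_Z2_supported, modes_field_supported.
Qed.

Lemma l2_bounded_modes_field (M : list mode) : l2_bounded (modes_field M).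
Proof. exact (l2_bounded_supported _ _ (modes_field_supported M)). Qed.

Lemma is_sum_Z2_zero : is_sum_Z2 (fun _ _ => RtoC 0) (RtoC 0).
Proof. exact (is_sum_Z2_modes_field []). Qed.

(** * Linearly decaying Fourier fields *)

Definition decay (kappa alpha : R) (p q : Z) (t : R) : R :=
  exp (- kappa * fracpow (modsq p q) alpha * t).

Lemma decay_0 (kappa alpha : R) (p q : Z) : decay kappa alpha p q 0 = 1.
Proof. unfold decay. rewrite Rmult_0_r. exact exp_0. Qed.

Lemma decay_opp (kappa alpha : R) (p q : Z) (t : R) :
  decay kappa alpha (- p) (- q) t = decay kappa alpha p q t.
Proof. unfold decay, modsq. rewrite !opp_IZR. do 4 f_equal. ring. Qed.

Lemma fracpow_nonneg (r a : R) : 0 <= fracpow r a.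
Proof.
  unfold fracpow. destruct (Req_EM_T r 0); [destruct (Req_EM_T a 0); lra|].
  left. apply exp_pos.
Qed.

Lemma decay_bounds (kappa alpha : R) (p q : Z) (t : R) : 0 <= kappa -> 0 <= t ->
  0 < decay kappa alpha p q t <= 1.
Proof.
  intros Hk Ht. unfold decay. split; [apply exp_pos|].
  pose proof (fracpow_nonneg (modsq p q) alpha).
  assert (0 <= kappa * fracpow (modsq p q) alpha) by (apply Rmult_le_pos; assumption).
  destruct (Rle_lt_or_eq_dec (- kappa * fracpow (modsq p q) alpha * t) 0) as [Hlt | ->]; [nra| |].
  - left. rewrite <- exp_0. apply exp_increasing, Hlt.
  - rewrite exp_0. lra.
Qed.

Definition decay_modes (kappa alpha t : R) (M : list mode) : list mode :=
  map (fun md => Mode (mode_p md) (mode_q md)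
                   (decay kappa alpha (mode_p md) (mode_q md) t * mode_amp md)%C) M.

Lemma modes_field_decay (kappa alpha t : R) (M : list mode) (p q : Z) :
  modes_field (decay_modes kappa alpha t M) p q = (decay kappa alpha p q t * modes_field M p q)%C.
Proof.
  unfold modes_field, decay_modes. rewrite sumC_map, <- sumC_mult_l. apply sumC_ext.
  intros md _. unfold dirac; simpl.
  destruct (Z.eqb_spec p (mode_p md)), (Z.eqb_spec q (mode_q md)); simpl; subst; try ring.
Qed.

Lemma l2_bounded_decay (kappa alpha t : R) (Th : Z -> Z -> C) :
  0 <= kappa -> 0 <= t -> l2_bounded Th ->
  l2_bounded (fun p q => decay kappa alpha p q t * Th p q)%C.
Proof.
  intros Hk Ht [M HM]. exists M. intros N. eapply Rle_trans; [|apply (HM N)].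
  apply box_sum_R_le. intros p q _ _.
  destruct (decay_bounds kappa alpha p q t Hk Ht). pose proof (Cmod_ge_0 (Th p q)).
  rewrite Cmod_mult, Cmod_R, Rabs_pos_eq by lra. rewrite Rpow_mult_distr.
  assert (decay kappa alpha p q t ^ 2 <= 1) by nra.
  assert (0 <= Cmod (Th p q) ^ 2) by apply pow2_ge_0. nra.
Qed.

Lemma is_derive_decay_mult (kappa alpha c t : R) (p q : Z) :
  is_derive (fun s => decay kappa alpha p q s * c) t
    (- (kappa * fracpow (modsq p q) alpha) * decay kappa alpha p q t * c).
Proof. unfold decay. auto_derive; [exact I | ring]. Qed.

Lemma SQG_fourier_solution_decay (kappa alpha : R) (Th : Z -> Z -> R -> C) :
  (forall p q t, Th p q t = (decay kappa alpha p q t * Th p q 0)%C) ->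
  (forall t, 0 <= t -> l2_bounded (fun p q => Th p q t)) ->
  (forall p q t, 0 <= t -> is_sum_Z2 (sqg_nl_term (fun a b => Th a b t) p q) (RtoC 0)) ->
  SQG_fourier_solution kappa alpha Th.
Proof.
  intros Hdecay Hl2 Hnl. split; [exact Hl2|].
  intros p q t Ht. exists (RtoC 0). split; [exact (Hnl p q t Ht)|]. cbv zeta.
  replace (Cminus (Copp (RtoC 0)) (RtoC (kappa * fracpow (modsq p q) alpha) * Th p q t))
    with (RtoC (- (kappa * fracpow (modsq p q) alpha) * decay kappa alpha p q t) * Th p q 0)%C
    by (rewrite (Hdecay p q t), !RtoC_mult, RtoC_opp, RtoC_mult; ring).
  rewrite re_scal_l, im_scal_l. split.
  - apply (is_derive_ext (fun s => decay kappa alpha p q s * Re (Th p q 0))).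
    { intros s. rewrite (Hdecay p q s), re_scal_l. reflexivity. }
    apply is_derive_decay_mult.
  - apply (is_derive_ext (fun s => decay kappa alpha p q s * Im (Th p q 0))).
    { intros s. rewrite (Hdecay p q s), im_scal_l. reflexivity. }
    apply is_derive_decay_mult.
Qed.

(** * The quadratic term *)

(* At [a = b = 0] this is [0 / 0 = 0], which is exactly the term [sqg_nl_term] leaves out. *)
Definition sqg_kernel (p q a b : Z) : R :=
  (IZR a * IZR (q - b) - IZR b * IZR (p - a)) / sqrt (modsq a b).

Lemma sqg_nl_term_kernel (Th : Z -> Z -> C) (p q a b : Z) :
  sqg_nl_term Th p q a b = (sqg_kernel p q a b * Th a b * Th (p - a)%Z (q - b)%Z)%C.
Proof.
  unfold sqg_nl_term. destruct (Z.eqb_spec a 0), (Z.eqb_spec b 0); simpl; try reflexivity.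
  subst. unfold sqg_kernel. rewrite !Rmult_0_l, Rminus_0_r. unfold Rdiv. rewrite Rmult_0_l.
  ring.
Qed.

Lemma sqg_kernel_swap (a b c d : Z) : modsq a b = modsq c d ->
  sqg_kernel (a + c) (b + d) a b = - sqg_kernel (a + c) (b + d) c d.
Proof.
  intros H. unfold sqg_kernel. rewrite H.
  replace (a + c - a)%Z with c by ring. replace (b + d - b)%Z with d by ring.
  replace (a + c - c)%Z with a by ring. replace (b + d - d)%Z with b by ring.
  unfold Rdiv. ring.
Qed.

(* The pair of modes (m1, m2) feeds the (p, q)-coefficient of u.grad(theta) when their
   frequencies add up to (p, q); [nl_modes] groups these contributions by the first mode. *)
Definition interaction (p q : Z) (m1 m2 : mode) : C :=
  dirac (mode_p m1 + mode_p m2) (mode_q m1 + mode_q m2)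
    (sqg_kernel p q (mode_p m1) (mode_q m1) * mode_amp m1 * mode_amp m2)%C p q.

Definition nl_modes (M : list mode) (p q : Z) : list mode :=
  map (fun m1 => Mode (mode_p m1) (mode_q m1) (sumC (interaction p q m1) M)) M.

Lemma sqg_nl_term_modes_field (M : list mode) (p q a b : Z) :
  sqg_nl_term (modes_field M) p q a b = modes_field (nl_modes M p q) a b.
Proof.
  rewrite sqg_nl_term_kernel. unfold nl_modes, modes_field at 3. rewrite sumC_map. simpl.
  set (k := sqg_kernel p q a b). set (S2 := modes_field M (p - a) (q - b)).
  unfold modes_field at 1.
  transitivity (sumC (fun md => k * S2 * dirac (mode_p md) (mode_q md) (mode_amp md) a b) M)%C;
    [rewrite sumC_mult_l; ring|].
  apply sumC_ext. intros m1 _. unfold dirac at 1 2.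
  destruct (Z.eqb_spec a (mode_p m1)), (Z.eqb_spec b (mode_q m1)); simpl; try ring.
  subst. unfold S2, modes_field.
  transitivity (sumC (fun m2 => k * mode_amp m1 *
     dirac (mode_p m2) (mode_q m2) (mode_amp m2) (p - mode_p m1) (q - mode_q m1)) M)%C;
    [rewrite sumC_mult_l; ring|].
  apply sumC_ext. intros m2 _. unfold k, interaction, dirac.
  destruct (Z.eqb_spec (p - mode_p m1) (mode_p m2)), (Z.eqb_spec (q - mode_q m1) (mode_q m2)),
    (Z.eqb_spec p (mode_p m1 + mode_p m2)), (Z.eqb_spec q (mode_q m1 + mode_q m2));
    simpl; try ring; lia.
Qed.

Definition modes_on_circle (M : list mode) : Prop :=
  forall m1 m2, In m1 M -> In m2 M ->
    mode_amp m1 = RtoC 0 \/ mode_amp m2 = RtoC 0 \/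
    modsq (mode_p m1) (mode_q m1) = modsq (mode_p m2) (mode_q m2).

(* The kernel (eta x zeta) / |eta| is antisymmetric in (eta, zeta) as soon as |eta| = |zeta|. *)
Lemma interaction_antisym (M : list mode) (p q : Z) (m1 m2 : mode) :
  modes_on_circle M -> In m1 M -> In m2 M ->
  interaction p q m1 m2 = (- interaction p q m2 m1)%C.
Proof.
  intros HM H1 H2. unfold interaction, dirac.
  destruct (Z.eqb_spec p (mode_p m1 + mode_p m2)), (Z.eqb_spec q (mode_q m1 + mode_q m2)),
    (Z.eqb_spec p (mode_p m2 + mode_p m1)), (Z.eqb_spec q (mode_q m2 + mode_q m1));
    simpl; try (exfalso; lia); try ring.
  destruct (HM m1 m2 H1 H2) as [-> | [-> | Hr]]; try ring.
  subst p q. rewrite (sqg_kernel_swap _ _ _ _ Hr), RtoC_opp. ring.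
Qed.

Lemma sum_nl_modes_on_circle (M : list mode) (p q : Z) :
  modes_on_circle M -> sumC mode_amp (nl_modes M p q) = RtoC 0.
Proof.
  intros HM. unfold nl_modes. rewrite sumC_map. simpl.
  apply sumC_antisym. intros m1 m2 H1 H2. exact (interaction_antisym M p q m1 m2 HM H1 H2).
Qed.

Lemma is_sum_Z2_sqg_nl_term_on_circle (M : list mode) (p q : Z) :
  modes_on_circle M -> is_sum_Z2 (sqg_nl_term (modes_field M) p q) (RtoC 0).
Proof.
  intros HM. rewrite <- (sum_nl_modes_on_circle M p q HM).
  replace (sqg_nl_term (modes_field M) p q) with (modes_field (nl_modes M p q)).
  - apply is_sum_Z2_modes_field.
  - do 2 (apply functional_extensionality; intro). symmetry. apply sqg_nl_term_modes_field.
Qed.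

Lemma modes_on_circle_decay (kappa alpha t : R) (M : list mode) :
  modes_on_circle M -> modes_on_circle (decay_modes kappa alpha t M).
Proof.
  intros HM m1 m2 H1 H2. unfold decay_modes in H1, H2. apply in_map_iff in H1, H2.
  destruct H1 as [n1 [<- H1]], H2 as [n2 [<- H2]]. simpl.
  destruct (HM n1 n2 H1 H2) as [-> | [-> | Hr]]; [left | right; left | right; right]; auto; ring.
Qed.

Definition on_line (n m p q : Z) : Prop := exists j, p = (j * n)%Z /\ q = (j * m)%Z.

Lemma sqg_nl_term_on_line (n m : Z) (Th : Z -> Z -> C) (p q a b : Z) :
  (forall p q, ~ on_line n m p q -> Th p q = RtoC 0) -> sqg_nl_term Th p q a b = RtoC 0.
Proof.
  intros HTh. rewrite sqg_nl_term_kernel.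
  destruct (classic (on_line n m a b)) as [[j [Ha Hb]] | Hab];
    [| rewrite (HTh a b Hab); ring].
  destruct (classic (on_line n m (p - a) (q - b))) as [[l [Hpa Hqb]] | Hpq];
    [| rewrite (HTh _ _ Hpq); ring].
  replace (sqg_kernel p q a b) with 0; [ring|].
  unfold sqg_kernel. rewrite Hpa, Hqb, Ha, Hb, !mult_IZR. unfold Rdiv. ring.
Qed.

(** * Trigonometric polynomials and their Fourier coefficients *)

Definition sumR {X : Type} (f : X -> R) (l : list X) : R :=
  fold_right (fun x s => f x + s) 0 l.

Lemma sumR_ext {X : Type} (f g : X -> R) (l : list X) :
  (forall x, In x l -> f x = g x) -> sumR f l = sumR g l.
Proof. induction l as [|x l IH]; simpl; intros H; [reflexivity|]. rewrite H, IH; auto. Qed.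

Lemma sumR_mult_r {X : Type} (c : R) (f : X -> R) (l : list X) :
  sumR (fun x => f x * c) l = sumR f l * c.
Proof. induction l as [|x l IH]; simpl; [ring|]. rewrite IH. ring. Qed.

Lemma sumR_opp {X : Type} (f : X -> R) (l : list X) :
  sumR (fun x => - f x) l = - sumR f l.
Proof. induction l as [|x l IH]; simpl; [ring|]. rewrite IH. ring. Qed.

Lemma sumR_flat_map {X Y : Type} (f : Y -> R) (g : X -> list Y) (l : list X) :
  sumR f (flat_map g l) = sumR (fun x => sumR f (g x)) l.
Proof.
  induction l as [|x l IH]; simpl; [reflexivity|]. rewrite <- IH.
  induction (g x) as [|y l' IH']; simpl; [ring|]. rewrite IH'. ring.
Qed.

Lemma sumC_components {X : Type} (f : X -> C) (l : list X) :
  sumC f l = (sumR (fun x => Re (f x)) l, sumR (fun x => Im (f x)) l).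
Proof. induction l as [|x l IH]; simpl; [reflexivity|]. rewrite IH. reflexivity. Qed.

Lemma is_RInt_zero (a b : R) : is_RInt (fun _ => 0) a b 0.
Proof.
  pose proof (is_RInt_const a b 0) as H.
  change (scal (b - a) 0) with ((b - a) * 0) in H. rewrite Rmult_0_r in H. exact H.
Qed.

Lemma is_RInt_sumR {X : Type} (f : X -> R -> R) (I : X -> R) (l : list X) (a b : R) :
  (forall x, In x l -> is_RInt (f x) a b (I x)) ->
  is_RInt (fun y => sumR (fun x => f x y) l) a b (sumR I l).
Proof.
  induction l as [|x l IH]; simpl; intros H.
  - apply is_RInt_zero.
  - apply (is_RInt_plus (f x) (fun y => sumR (fun x => f x y) l)); auto.
Qed.

Lemma cos_add_2kPI (A : R) (k : Z) : cos (A + 2 * IZR k * PI) = cos A.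
Proof.
  destruct (Z_le_gt_dec 0 k).
  - rewrite <- (Z2Nat.id k), <- INR_IZR_INZ by lia. apply cos_period.
  - rewrite <- (cos_period (A + 2 * IZR k * PI) (Z.to_nat (- k))), INR_IZR_INZ, Z2Nat.id by lia.
    f_equal. rewrite opp_IZR. ring.
Qed.

Lemma sin_add_2kPI (A : R) (k : Z) : sin (A + 2 * IZR k * PI) = sin A.
Proof.
  destruct (Z_le_gt_dec 0 k).
  - rewrite <- (Z2Nat.id k), <- INR_IZR_INZ by lia. apply sin_period.
  - rewrite <- (sin_period (A + 2 * IZR k * PI) (Z.to_nat (- k))), INR_IZR_INZ, Z2Nat.id by lia.
    f_equal. rewrite opp_IZR. ring.
Qed.

Lemma is_RInt_trig (c s A : R) (v : Z) :
  is_RInt (fun y => c * cos (A + IZR v * y) + s * sin (A + IZR v * y)) 0 (2 * PI)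
    (if Z.eqb v 0 then 2 * PI * (c * cos A + s * sin A) else 0).
Proof.
  destruct (Z.eqb_spec v 0) as [-> | Hv].
  - apply (is_RInt_ext (fun _ => c * cos A + s * sin A)).
    { intros y _. rewrite Rmult_0_l, Rplus_0_r. reflexivity. }
    pose proof (is_RInt_const 0 (2 * PI) (c * cos A + s * sin A)) as H.
    change (scal ?u ?w) with (u * w) in H. rewrite Rminus_0_r in H. exact H.
  - assert (HV : IZR v <> 0) by (apply not_0_IZR; exact Hv).
    set (G := fun y => (c * sin (A + IZR v * y) - s * cos (A + IZR v * y)) / IZR v).
    replace 0 with (G (2 * PI) - G 0) at 2.
    + apply (is_RInt_derive G).
      * intros y _. unfold G. auto_derive; [exact I|]. field. exact HV.
      * intros y _. apply (@ex_derive_continuous R_AbsRing R_NormedModule). auto_derive. exact I.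
    + unfold G. replace (A + IZR v * (2 * PI)) with (A + 2 * IZR v * PI) by ring.
      rewrite sin_add_2kPI, cos_add_2kPI, Rmult_0_r, Rplus_0_r. ring.
Qed.

Record wave := Wave { wave_cos : R; wave_sin : R; wave_p : Z; wave_q : Z }.

Definition wave_eval (w : wave) (x y : R) : R :=
  wave_cos w * cos (IZR (wave_p w) * x + IZR (wave_q w) * y)
  + wave_sin w * sin (IZR (wave_p w) * x + IZR (wave_q w) * y).

Definition waves_eval (L : list wave) (x y : R) : R := sumR (fun w => wave_eval w x y) L.

Lemma waves_eval_periodic (L : list wave) : periodic_xy (waves_eval L).
Proof.
  intros x y. unfold waves_eval. split; apply sumR_ext; intros w _; unfold wave_eval.
  - replace (IZR (wave_p w) * (x + 2 * PI) + IZR (wave_q w) * y)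
      with (IZR (wave_p w) * x + IZR (wave_q w) * y + 2 * IZR (wave_p w) * PI) by ring.
    rewrite cos_add_2kPI, sin_add_2kPI. reflexivity.
  - replace (IZR (wave_p w) * x + IZR (wave_q w) * (y + 2 * PI))
      with (IZR (wave_p w) * x + IZR (wave_q w) * y + 2 * IZR (wave_q w) * PI) by ring.
    rewrite cos_add_2kPI, sin_add_2kPI. reflexivity.
Qed.

Definition wave_mean (w : wave) : R :=
  if (Z.eqb (wave_p w) 0 && Z.eqb (wave_q w) 0)%bool then wave_cos w else 0.

Lemma RInt_torus_waves_eval (L : list wave) :
  RInt (fun x => RInt (fun y => waves_eval L x y) 0 (2 * PI)) 0 (2 * PI)
  = 4 * PI ^ 2 * sumR wave_mean L.
Proof.
  set (row := fun w x => if Z.eqb (wave_q w) 0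
                         then 2 * PI * (wave_cos w * cos (IZR (wave_p w) * x)
                                        + wave_sin w * sin (IZR (wave_p w) * x))
                         else 0).
  rewrite (RInt_ext _ (fun x => sumR (fun w => row w x) L)).
  - rewrite (Rmult_comm (4 * PI ^ 2)), <- sumR_mult_r. apply is_RInt_unique, is_RInt_sumR.
    intros w _. unfold row, wave_mean.
    destruct (Z.eqb_spec (wave_q w) 0).
    + apply (is_RInt_ext (fun x => 2 * PI * wave_cos w * cos (0 + IZR (wave_p w) * x)
                                   + 2 * PI * wave_sin w * sin (0 + IZR (wave_p w) * x))).
      { intros x _. rewrite Rplus_0_l. change (?a = ?b) with (@eq R a b). ring. }
      pose proof (is_RInt_trig (2 * PI * wave_cos w) (2 * PI * wave_sin w) 0 (wave_p w)) as H.
      rewrite cos_0, sin_0 in H. destruct (Z.eqb (wave_p w) 0); cbn [andb].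
      * replace (wave_cos w * (4 * PI ^ 2))
          with (2 * PI * (2 * PI * wave_cos w * 1 + 2 * PI * wave_sin w * 0)) by ring.
        exact H.
      * rewrite Rmult_0_l. exact H.
    + rewrite Bool.andb_false_r, Rmult_0_l. apply is_RInt_zero.
  - intros x _. apply is_RInt_unique, is_RInt_sumR. intros w _. apply is_RInt_trig.
Qed.

Definition wave_mul_cos (p q : Z) (w : wave) : list wave :=
  [Wave (wave_cos w / 2) (wave_sin w / 2) (wave_p w + p) (wave_q w + q);
   Wave (wave_cos w / 2) (wave_sin w / 2) (wave_p w - p) (wave_q w - q)].

Definition wave_mul_sin (p q : Z) (w : wave) : list wave :=
  [Wave (- wave_sin w / 2) (wave_cos w / 2) (wave_p w + p) (wave_q w + q);
   Wave (wave_sin w / 2) (- wave_cos w / 2) (wave_p w - p) (wave_q w - q)].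

Lemma waves_eval_mul_cos (L : list wave) (p q : Z) (x y : R) :
  waves_eval (flat_map (wave_mul_cos p q) L) x y = waves_eval L x y * cos (IZR p * x + IZR q * y).
Proof.
  unfold waves_eval. rewrite sumR_flat_map, <- sumR_mult_r. apply sumR_ext. intros w _.
  unfold wave_mul_cos, wave_eval; simpl. rewrite !plus_IZR, !minus_IZR.
  set (A := IZR (wave_p w) * x + IZR (wave_q w) * y). set (B := IZR p * x + IZR q * y).
  replace ((IZR (wave_p w) + IZR p) * x + (IZR (wave_q w) + IZR q) * y) with (A + B)
    by (unfold A, B; ring).
  replace ((IZR (wave_p w) - IZR p) * x + (IZR (wave_q w) - IZR q) * y) with (A - B)
    by (unfold A, B; ring).
  rewrite cos_plus, cos_minus, sin_plus, sin_minus. field.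
Qed.

Lemma waves_eval_mul_sin (L : list wave) (p q : Z) (x y : R) :
  waves_eval (flat_map (wave_mul_sin p q) L) x y = waves_eval L x y * sin (IZR p * x + IZR q * y).
Proof.
  unfold waves_eval. rewrite sumR_flat_map, <- sumR_mult_r. apply sumR_ext. intros w _.
  unfold wave_mul_sin, wave_eval; simpl. rewrite !plus_IZR, !minus_IZR.
  set (A := IZR (wave_p w) * x + IZR (wave_q w) * y). set (B := IZR p * x + IZR q * y).
  replace ((IZR (wave_p w) + IZR p) * x + (IZR (wave_q w) + IZR q) * y) with (A + B)
    by (unfold A, B; ring).
  replace ((IZR (wave_p w) - IZR p) * x + (IZR (wave_q w) - IZR q) * y) with (A - B)
    by (unfold A, B; ring).
  rewrite cos_plus, cos_minus, sin_plus, sin_minus. field.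
Qed.

(* c cos(phi) + s sin(phi) = (c - i s)/2 e^(i phi) + (c + i s)/2 e^(-i phi). *)
Definition wave_modes (w : wave) : list mode :=
  [Mode (wave_p w) (wave_q w) (wave_cos w / 2, - wave_sin w / 2);
   Mode (- wave_p w) (- wave_q w) (wave_cos w / 2, wave_sin w / 2)].

Definition waves_modes (L : list wave) : list mode := flat_map wave_modes L.

Lemma fcoef_ext (f g : R -> R -> R) (p q : Z) :
  (forall x y, f x y = g x y) -> fcoef f p q = fcoef g p q.
Proof.
  intros H. unfold fcoef. do 2 f_equal; [|f_equal];
    apply RInt_ext; intros; apply RInt_ext; intros; rewrite H; reflexivity.
Qed.

Lemma fcoef_waves_eval (L : list wave) (p q : Z) :
  fcoef (waves_eval L) p q = modes_field (waves_modes L) p q.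
Proof.
  unfold fcoef.
  rewrite (RInt_ext
    (fun x => RInt (fun y => waves_eval L x y * cos (IZR p * x + IZR q * y)) 0 (2 * PI))
    (fun x => RInt (fun y => waves_eval (flat_map (wave_mul_cos p q) L) x y) 0 (2 * PI)))
    by (intros; apply RInt_ext; intros; rewrite waves_eval_mul_cos; reflexivity).
  rewrite (RInt_ext
    (fun x => RInt (fun y => waves_eval L x y * sin (IZR p * x + IZR q * y)) 0 (2 * PI))
    (fun x => RInt (fun y => waves_eval (flat_map (wave_mul_sin p q) L) x y) 0 (2 * PI)))
    by (intros; apply RInt_ext; intros; rewrite waves_eval_mul_sin; reflexivity).
  assert (Hnorm : forall X, / (4 * PI ^ 2) * (4 * PI ^ 2 * X) = X)
    by (intros; field; pose proof PI_RGT_0; nra).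
  rewrite !RInt_torus_waves_eval, !Hnorm.
  unfold modes_field, waves_modes. rewrite sumC_flat_map, sumC_components, !sumR_flat_map.
  f_equal; [| rewrite <- sumR_opp]; apply sumR_ext; intros w _;
    unfold wave_mul_cos, wave_mul_sin, wave_mean, wave_modes, dirac; simpl;
    destruct (Z.eqb_spec (wave_p w + p) 0), (Z.eqb_spec (wave_q w + q) 0),
      (Z.eqb_spec (wave_p w - p) 0), (Z.eqb_spec (wave_q w - q) 0),
      (Z.eqb_spec p (wave_p w)), (Z.eqb_spec q (wave_q w)),
      (Z.eqb_spec p (- wave_p w)), (Z.eqb_spec q (- wave_q w));
    simpl; try (exfalso; lia); lra.
Qed.

Definition decay_waves (kappa alpha t : R) (L : list wave) : list wave :=
  map (fun w => Wave (decay kappa alpha (wave_p w) (wave_q w) t * wave_cos w)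
                     (decay kappa alpha (wave_p w) (wave_q w) t * wave_sin w)
                     (wave_p w) (wave_q w)) L.

Lemma waves_modes_decay (kappa alpha t : R) (L : list wave) :
  waves_modes (decay_waves kappa alpha t L) = decay_modes kappa alpha t (waves_modes L).
Proof.
  induction L as [|w L IH]; [reflexivity|]. simpl. rewrite IH, decay_opp.
  unfold Cmult, RtoC; simpl. f_equal; [|f_equal]; f_equal; f_equal; field.
Qed.

Lemma solves_SQG_decay_waves (kappa alpha : R) (theta : R -> R -> R -> R) (L : list wave) :
  (forall x y t, theta x y t = waves_eval (decay_waves kappa alpha t L) x y) ->
  modes_on_circle (waves_modes L) ->
  solves_SQG kappa alpha theta.
Proof.
  intros Htheta HL. split.
  - intros t x y. rewrite !Htheta. apply waves_eval_periodic.
  - replace (fun p q t => fcoef (fun x y => theta x y t) p q)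
      with (fun p q t => modes_field (decay_modes kappa alpha t (waves_modes L)) p q).
    2: { do 3 (apply functional_extensionality; intro).
         rewrite (fcoef_ext _ _ _ _ (fun x y => Htheta x y _)), fcoef_waves_eval,
           waves_modes_decay.
         reflexivity. }
    apply SQG_fourier_solution_decay.
    + intros p q t. rewrite !modes_field_decay, decay_0, Cmult_1_l. reflexivity.
    + intros t _. apply l2_bounded_modes_field.
    + intros p q t _. apply is_sum_Z2_sqg_nl_term_on_circle, modes_on_circle_decay, HL.
Qed.

(** * The two families of solutions *)

Section TrigSolution.
Variables (c1 c2 c3 c4 c5 c6 c7 c8 : R) (n m k : Z).

(* Product-to-sum, e.g. sin(nx) sin(my) = (cos(nx - my) - cos(nx + my)) / 2. *)
Definition trig_waves : list wave :=
  [Wave ((c4 - c1) / 2) ((c2 + c3) / 2) n m; Wave ((c1 + c4) / 2) ((c3 - c2) / 2) n (- m);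
   Wave c7 c5 k 0; Wave c8 c6 0 k].

Lemma trig_waves_eval (kappa alpha x y t : R) :
  exp (- kappa * fracpow (IZR n ^ 2 + IZR m ^ 2) alpha * t) *
    (c1 * sin (IZR n * x) * sin (IZR m * y) + c2 * cos (IZR n * x) * sin (IZR m * y)
     + c3 * sin (IZR n * x) * cos (IZR m * y) + c4 * cos (IZR n * x) * cos (IZR m * y))
  + exp (- kappa * fracpow (IZR k ^ 2) alpha * t) *
    (c5 * sin (IZR k * x) + c6 * sin (IZR k * y) + c7 * cos (IZR k * x) + c8 * cos (IZR k * y))
  = waves_eval (decay_waves kappa alpha t trig_waves) x y.
Proof.
  assert (Hnm : modsq n (- m) = modsq n m) by (unfold modsq; rewrite opp_IZR; ring).
  assert (Hk0 : modsq k 0 = IZR k ^ 2) by (unfold modsq; simpl; ring).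
  assert (H0k : modsq 0 k = IZR k ^ 2) by (unfold modsq; simpl; ring).
  unfold waves_eval, sumR, decay_waves, trig_waves, wave_eval, decay.
  cbn [map fold_right wave_cos wave_sin wave_p wave_q].
  rewrite Hnm, Hk0, H0k. unfold modsq.
  rewrite opp_IZR. replace (IZR n * x + - IZR m * y) with (IZR n * x - IZR m * y) by ring.
  change (IZR 0) with 0. rewrite !Rmult_0_l, Rplus_0_l, Rplus_0_r.
  rewrite cos_plus, sin_plus, cos_minus, sin_minus. field.
Qed.

Lemma trig_waves_on_circle :
  ((Rabs c1 + Rabs c2 + Rabs c3 + Rabs c4) * (Rabs c5 + Rabs c6 + Rabs c7 + Rabs c8) <> 0 ->
     (n * n + m * m = k * k)%Z) ->
  modes_on_circle (waves_modes trig_waves).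
Proof.
  intros Hk.
  assert (HS : (c1 = 0 /\ c2 = 0 /\ c3 = 0 /\ c4 = 0) \/ (c5 = 0 /\ c6 = 0 /\ c7 = 0 /\ c8 = 0) \/
               IZR n ^ 2 + IZR m ^ 2 = IZR k ^ 2).
  { destruct (Req_dec (Rabs c1 + Rabs c2 + Rabs c3 + Rabs c4) 0) as [H1|H1].
    - left. pose proof (Rabs_pos c1); pose proof (Rabs_pos c2); pose proof (Rabs_pos c3);
        pose proof (Rabs_pos c4). repeat split; apply Rabs_eq_0; lra.
    - destruct (Req_dec (Rabs c5 + Rabs c6 + Rabs c7 + Rabs c8) 0) as [H2|H2].
      + right; left. pose proof (Rabs_pos c5); pose proof (Rabs_pos c6); pose proof (Rabs_pos c7);
          pose proof (Rabs_pos c8). repeat split; apply Rabs_eq_0; lra.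
      + right; right. specialize (Hk (Rmult_integral_contrapositive_currified _ _ H1 H2)).
        apply (f_equal IZR) in Hk. rewrite !plus_IZR, !mult_IZR in Hk. lra. }
  intros m1 m2 H1 H2. simpl in H1, H2.
  repeat (destruct H1 as [<- | H1]); try contradiction;
  repeat (destruct H2 as [<- | H2]); try contradiction; cbn [mode_p mode_q mode_amp];
  destruct HS as [[-> [-> [-> ->]]] | [[-> [-> [-> ->]]] | HS]];
  first [ right; right; unfold modsq; rewrite ?opp_IZR; lra
        | left; unfold RtoC; f_equal; lra
        | right; left; unfold RtoC; f_equal; lra ].
Qed.

End TrigSolution.

Section LineSeries.
Variables (n m : Z) (a b : Z -> R).
Hypothesis nm_neq0 : (Z.abs n + Z.abs m <> 0)%Z.

Definition line_wave (k : Z) : wave := Wave (a k) (b k) (k * n) (k * m).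

Definition line_coef (k p q : Z) : C := modes_field (wave_modes (line_wave k)) p q.

(* Only the terms with |k| <= |p| + |q| contribute at (p, q), see [line_coef_far]. *)
Definition line_field (p q : Z) : C :=
  sym_sum (fun k => line_coef k p q) (Z.to_nat (Z.abs p + Z.abs q)).

Lemma line_index_bound (j p q : Z) : p = (j * n)%Z -> q = (j * m)%Z ->
  (Z.abs j <= Z.abs p + Z.abs q)%Z.
Proof. intros -> ->. rewrite !Z.abs_mul. nia. Qed.

Lemma line_point_eqb (j k : Z) :
  (Z.eqb (j * n) (k * n) && Z.eqb (j * m) (k * m))%bool = Z.eqb j k.
Proof.
  destruct (Z.eqb_spec j k) as [-> | Hjk]; [rewrite !Z.eqb_refl; reflexivity|].
  destruct (Z.eqb_spec (j * n) (k * n)), (Z.eqb_spec (j * m) (k * m)); try reflexivity.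
  exfalso. assert (Hn : ((j - k) * n = 0)%Z) by lia. assert (Hm : ((j - k) * m = 0)%Z) by lia.
  apply Z.mul_eq_0 in Hn, Hm. lia.
Qed.

Lemma line_coef_eq (k p q : Z) : line_coef k p q =
  Cplus (dirac (k * n) (k * m) (a k / 2, - b k / 2) p q)
        (dirac (- (k * n)) (- (k * m)) (a k / 2, b k / 2) p q).
Proof. unfold line_coef, modes_field. simpl. ring. Qed.

Lemma line_coef_off_line (k p q : Z) : ~ on_line n m p q -> line_coef k p q = RtoC 0.
Proof.
  intros Hoff. rewrite line_coef_eq. unfold dirac.
  destruct (Z.eqb_spec p (k * n)), (Z.eqb_spec q (k * m)); simpl;
    [exfalso; apply Hoff; exists k; auto | | |];
  (destruct (Z.eqb_spec p (- (k * n))), (Z.eqb_spec q (- (k * m))); simpl;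
    [exfalso; apply Hoff; exists (- k)%Z; lia | ring | ring | ring]).
Qed.

Lemma line_coef_far (k p q : Z) : (Z.abs p + Z.abs q < Z.abs k)%Z -> line_coef k p q = RtoC 0.
Proof.
  intros Hfar. rewrite line_coef_eq. unfold dirac.
  destruct (Z.eqb_spec p (k * n)) as [Hp | Hp], (Z.eqb_spec q (k * m)) as [Hq | Hq]; simpl;
    [pose proof (line_index_bound k p q Hp Hq); lia | | |];
  (destruct (Z.eqb_spec p (- (k * n))), (Z.eqb_spec q (- (k * m))); simpl; [|ring | ring | ring]).
  all: assert (Hp' : p = (- k * n)%Z) by lia; assert (Hq' : q = (- k * m)%Z) by lia;
    pose proof (line_index_bound (- k) p q Hp' Hq'); lia.
Qed.

Lemma line_field_off_line (p q : Z) : ~ on_line n m p q -> line_field p q = RtoC 0.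
Proof.
  intros Hoff. unfold line_field.
  transitivity (sym_sum (fun _ => @zero C_AbelianMonoid) (Z.to_nat (Z.abs p + Z.abs q))).
  - apply sym_sum_ext. intros k. apply line_coef_off_line, Hoff.
  - exact (sym_sum_zero _).
Qed.

Lemma sym_sum_line_coef (p q : Z) (K : nat) : (Z.to_nat (Z.abs p + Z.abs q) <= K)%nat ->
  sym_sum (fun k => line_coef k p q) K = line_field p q.
Proof.
  intros HK. apply sym_sum_stable; [|exact HK]. intros k Hk.
  apply line_coef_far. lia.
Qed.

Lemma line_field_on_line (j : Z) :
  line_field (j * n) (j * m) = ((a j + a (- j)%Z) / 2, (b (- j)%Z - b j) / 2).
Proof.
  unfold line_field. set (B := Z.to_nat (Z.abs (j * n) + Z.abs (j * m))).
  assert (HjB : (Z.abs j <= Z.of_nat B)%Z)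
    by (unfold B; pose proof (line_index_bound j _ _ eq_refl eq_refl); lia).
  set (u := fun k : Z => ((a k / 2, - b k / 2) : C)).
  set (v := fun k : Z => ((a k / 2, b k / 2) : C)).
  transitivity (sym_sum (fun k => @plus C_AbelianMonoid (if Z.eqb k j then u k else zero)
                                                         (if Z.eqb k (- j) then v k else zero)) B).
  - apply sym_sum_ext. intros k. rewrite line_coef_eq. unfold dirac.
    replace (- (k * n))%Z with (- k * n)%Z by ring. replace (- (k * m))%Z with (- k * m)%Z by ring.
    rewrite !line_point_eqb, (Z.eqb_sym j k).
    replace (Z.eqb j (- k)) with (Z.eqb k (- j))
      by (destruct (Z.eqb_spec j (- k)), (Z.eqb_spec k (- j)); lia).
    reflexivity.
  - rewrite sym_sum_plus.
    rewrite (sym_sum_ext (fun k => if Z.eqb k j then u k else zero)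
                         (fun k => if Z.eqb k j then u j else zero))
      by (intros k; destruct (Z.eqb_spec k j); subst; reflexivity).
    rewrite (sym_sum_ext (fun k => if Z.eqb k (- j) then v k else zero)
                         (fun k => if Z.eqb k (- j) then v (- j)%Z else zero))
      by (intros k; destruct (Z.eqb_spec k (- j)); subst; reflexivity).
    rewrite !sym_sum_dirac.
    destruct (Z.leb_spec (Z.abs j) (Z.of_nat B)), (Z.leb_spec (Z.abs (- j)) (Z.of_nat B)); try lia.
    change (plus ?x ?y) with (Cplus x y). unfold u, v, Cplus; simpl. f_equal; field.
Qed.

Lemma sym_sum_indicator_line (j : Z) (s : Z -> R) (K : nat) : (Z.abs j <= Z.of_nat K)%Z ->
  sym_sum (fun k => indicator (k * n) (k * m) (j * n) (j * m) * s k) K = s j.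
Proof.
  intros HjK. transitivity (sym_sum (fun k => if Z.eqb k j then s j else 0) K).
  - apply sym_sum_ext. intros k. unfold indicator. rewrite line_point_eqb.
    destruct (Z.eqb_spec j k), (Z.eqb_spec k j); subst; try lia;
      first [apply Rmult_1_l | apply Rmult_0_l].
  - etransitivity; [exact (sym_sum_dirac (G := R_AbelianMonoid) j (s j) K)|].
    destruct (Z.leb_spec (Z.abs j) (Z.of_nat K)); [reflexivity | lia].
Qed.

Lemma Cmod_line_field_on_line_sqr_le (j : Z) :
  Cmod (line_field (j * n) (j * m)) ^ 2 <= (a j ^ 2 + b j ^ 2) + (a (- j)%Z ^ 2 + b (- j)%Z ^ 2).
Proof.
  rewrite line_field_on_line, Cmod_sqr_components. simpl.
  pose proof (pow2_ge_0 (a j - a (- j)%Z)). pose proof (pow2_ge_0 (b j + b (- j)%Z)). nra.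
Qed.

Lemma line_field_l2_bounded :
  ex_series (fun j : nat =>
    INR j * (a (Z.of_nat j) ^ 2 + b (Z.of_nat j) ^ 2)
    + INR j * (a (- Z.of_nat j)%Z ^ 2 + b (- Z.of_nat j)%Z ^ 2)) ->
  l2_bounded line_field.
Proof.
  intros Hser. set (g := fun j => a j ^ 2 + b j ^ 2).
  assert (Hg : forall j, 0 <= g j)
    by (intros j; unfold g; pose proof (pow2_ge_0 (a j)); pose proof (pow2_ge_0 (b j)); lra).
  exists (2 * (g 0%Z + Series (fun j : nat =>
                                 INR j * g (Z.of_nat j) + INR j * g (- Z.of_nat j)%Z))).
  intros N. apply Rle_trans with (sym_sum (fun j => g j + g (- j)%Z) (2 * N)).
  - apply (box_sum_R_le_sym_sum _ (fun j => j * n)%Z (fun j => j * m)%Z).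
    + intros j. pose proof (Hg j). pose proof (Hg (- j)%Z). lra.
    + intros p q Hp Hq. destruct (classic (on_line n m p q)) as [[j [-> ->]] | Hoff].
      * pose proof (line_index_bound j _ _ eq_refl eq_refl).
        rewrite sym_sum_indicator_line by lia. apply Cmod_line_field_on_line_sqr_le.
      * rewrite line_field_off_line, Cmod_0, pow_i by (assumption || lia).
        apply sym_sum_nonneg. intros k. unfold indicator.
        pose proof (Hg k). pose proof (Hg (- k)%Z).
        destruct (_ && _)%bool; lra.
  - rewrite sym_sum_plus_reflect. pose proof (sym_sum_le_series g Hg Hser (2 * N)). lra.
Qed.

Lemma line_wave_eval (kappa alpha x y t : R) (k : Z) :
  exp (- kappa * fracpow (IZR n ^ 2 * IZR k ^ 2 + IZR m ^ 2 * IZR k ^ 2) alpha * t) *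
    (a k * cos (IZR k * IZR n * x + IZR k * IZR m * y)
     + b k * sin (IZR k * IZR n * x + IZR k * IZR m * y))
  = waves_eval (decay_waves kappa alpha t [line_wave k]) x y.
Proof.
  unfold waves_eval, sumR, decay_waves, line_wave, wave_eval, decay, modsq.
  cbn [map fold_right wave_cos wave_sin wave_p wave_q]. rewrite !mult_IZR.
  replace ((IZR k * IZR n) ^ 2 + (IZR k * IZR m) ^ 2)
    with (IZR n ^ 2 * IZR k ^ 2 + IZR m ^ 2 * IZR k ^ 2) by ring.
  ring.
Qed.

Lemma fcoef_line_wave (kappa alpha t : R) (k p q : Z) :
  fcoef (waves_eval (decay_waves kappa alpha t [line_wave k])) p q
  = (decay kappa alpha p q t * line_coef k p q)%C.
Proof.
  rewrite fcoef_waves_eval, waves_modes_decay, modes_field_decay. reflexivity.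
Qed.

End LineSeries.

Lemma sqg_trig_solution (kappa alpha : R) :
  forall (c1 c2 c3 c4 c5 c6 c7 c8 : R) (n m k : Z),
    (n * m <> 0)%Z ->
    ((Rabs c1 + Rabs c2 + Rabs c3 + Rabs c4) * (Rabs c5 + Rabs c6 + Rabs c7 + Rabs c8) <> 0 ->
       (n * n + m * m = k * k)%Z) ->
    solves_SQG kappa alpha
      (fun x y t =>
         exp (- kappa * fracpow (IZR n ^ 2 + IZR m ^ 2) alpha * t) *
           (c1 * sin (IZR n * x) * sin (IZR m * y) + c2 * cos (IZR n * x) * sin (IZR m * y)
            + c3 * sin (IZR n * x) * cos (IZR m * y) + c4 * cos (IZR n * x) * cos (IZR m * y))
         + exp (- kappa * fracpow (IZR k ^ 2) alpha * t) *
           (c5 * sin (IZR k * x) + c6 * sin (IZR k * y)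
            + c7 * cos (IZR k * x) + c8 * cos (IZR k * y))).
Proof.
  (* The decomposition into waves does not need [n * m <> 0]. *)
  intros c1 c2 c3 c4 c5 c6 c7 c8 n m k _ Hk.
  apply (solves_SQG_decay_waves _ _ _ (trig_waves c1 c2 c3 c4 c5 c6 c7 c8 n m k)).
  - intros x y t. apply trig_waves_eval.
  - apply trig_waves_on_circle, Hk.
Qed.

Lemma sqg_line_series_solution (kappa alpha : R) : 0 <= kappa ->
  forall (n m : Z) (a b : Z -> R),
    (Z.abs n + Z.abs m <> 0)%Z ->
    ex_series (fun j : nat =>
      INR j * (a (Z.of_nat j) ^ 2 + b (Z.of_nat j) ^ 2)
      + INR j * (a (- Z.of_nat j)%Z ^ 2 + b (- Z.of_nat j)%Z ^ 2)) ->
    solves_SQG_series kappa alpha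
      (fun k x y t =>
         exp (- kappa * fracpow (IZR n ^ 2 * IZR k ^ 2 + IZR m ^ 2 * IZR k ^ 2) alpha * t) *
           (a k * cos (IZR k * IZR n * x + IZR k * IZR m * y)
            + b k * sin (IZR k * IZR n * x + IZR k * IZR m * y))).
Proof.
  intros Hkappa n m a b Hnm Hser. split.
  - intros k t x y. cbv beta. rewrite !line_wave_eval. apply waves_eval_periodic.
  - exists (fun p q t => decay kappa alpha p q t * line_field n m a b p q)%C. split.
    + intros p q t.
      apply (filterlim_ext_loc (fun _ => decay kappa alpha p q t * line_field n m a b p q)%C);
        [|apply filterlim_const].
      exists (Z.to_nat (Z.abs p + Z.abs q)). intros K HK.
      rewrite <- (sym_sum_line_coef n m a b Hnm p q K HK), <- (sym_sum_mult_l (K := C_Ring)).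
      apply sum_n_ext. intros i.
      rewrite (fcoef_ext _ _ p q (fun x y => line_wave_eval n m a b kappa alpha x y t _)). symmetry.
      apply fcoef_line_wave.
    + apply SQG_fourier_solution_decay.
      * intros p q t. rewrite decay_0, Cmult_1_l. reflexivity.
      * intros t Ht. apply l2_bounded_decay; [exact Hkappa | exact Ht |].
        apply line_field_l2_bounded; assumption.
      * intros p q t _.
        replace (sqg_nl_term (fun a' b' => decay kappa alpha a' b' t * line_field n m a b a' b')%C
                             p q)
          with (fun _ _ : Z => RtoC 0); [apply is_sum_Z2_zero|].
        do 2 (apply functional_extensionality; intro). symmetry.
        apply (sqg_nl_term_on_line n m). intros p' q' Hoff.
        rewrite line_field_off_line by assumption. ring.
Qed.

Theorem theorem1 (kappa alpha : R) (Halpha : 0 <= alpha < 1) (Hkappa : 0 < kappa) :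
  (forall (c1 c2 c3 c4 c5 c6 c7 c8 : R) (n m k : Z),
      (n * m <> 0)%Z ->
      ((Rabs c1 + Rabs c2 + Rabs c3 + Rabs c4) * (Rabs c5 + Rabs c6 + Rabs c7 + Rabs c8) <> 0 ->
         (n * n + m * m = k * k)%Z) ->
      solves_SQG kappa alpha
        (fun x y t =>
           exp (- kappa * fracpow (IZR n ^ 2 + IZR m ^ 2) alpha * t) *
             (c1 * sin (IZR n * x) * sin (IZR m * y) + c2 * cos (IZR n * x) * sin (IZR m * y)
              + c3 * sin (IZR n * x) * cos (IZR m * y) + c4 * cos (IZR n * x) * cos (IZR m * y))
           + exp (- kappa * fracpow (IZR k ^ 2) alpha * t) *
             (c5 * sin (IZR k * x) + c6 * sin (IZR k * y)
              + c7 * cos (IZR k * x) + c8 * cos (IZR k * y)))) /\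
  (forall (n m : Z) (a b : Z -> R),
      (Z.abs n + Z.abs m <> 0)%Z ->
      ex_series (fun j : nat =>
        INR j * (a (Z.of_nat j) ^ 2 + b (Z.of_nat j) ^ 2)
        + INR j * (a (- Z.of_nat j)%Z ^ 2 + b (- Z.of_nat j)%Z ^ 2)) ->
      solves_SQG_series kappa alpha
        (fun k x y t =>
           exp (- kappa * fracpow (IZR n ^ 2 * IZR k ^ 2 + IZR m ^ 2 * IZR k ^ 2) alpha * t) *
             (a k * cos (IZR k * IZR n * x + IZR k * IZR m * y)
              + b k * sin (IZR k * IZR n * x + IZR k * IZR m * y)))).
Proof.
  (* Neither family needs the restriction on [alpha], and (ii) only needs [0 <= kappa]. *)
  split; [apply sqg_trig_solution | apply sqg_line_series_solution; lra].
Qed.
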